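(* Let $G=\langle(123456),(16)(25)(34)\rangle\le S_6$ (the dihedral group of order $12$ acting on the vertices of a hexagon) and $D=\{(4,2),(3^2)\}$. Then $Aut_0(T_{D;G})$ is the trivial group.
   Context: For a partition $\lambda=(\lambda_1\ge\dots\ge\lambda_k>0)$ of $6$, a tabloid of shape $\lambda$ is a sequence $A=(A_1,\dots,A_k)$ of pairwise disjoint subsets of $\{1,\dots,6\}$ with $|A_i|=\lambda_i$; $T_\lambda$ is their set. $S_6$ acts by $\zeta A=(\zeta(A_1),\dots,\zeta(A_k))$. Tabloids are partially ordered by $A\le B$ iff $A_1\cup\dots\cup A_i\subseteq B_1\cup\dots\cup B_i$ for all $i\ge1$ (missing rows empty). $T_{\lambda;G}$ is the set of $G$-orbits in $T_\lambda$ and $T_{D;G}=\bigcup_{\mu\in D}T_{\mu;G}$, ordered by $a\le b$ iff there are $A\in a$, $B\in b$ with $A\le B$. $Aut_0(T_{D;G})$ is the group of bijections $\alpha$ of $T_{D;G}$ with $\alpha(a)\le\alpha(b)\iff a\le b$ and $\alpha(T_{\mu;G})=T_{\mu;G}$ for every $\mu\in D$. *)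

From mathcomp Require Import all_boot all_fingroup.
Set Implicit Arguments.
Unset Strict Implicit.
Unset Printing Implicit Defensive.

(* The points 1..6 are represented by the ordinals 0..5 of 'I_6
   (ordinal i stands for the point i+1). *)
Definition pt := 'I_6.

(* Tabloids: a sequence (A_1,...,A_k) of subsets, encoded as a 6-indexed
   family of sets where missing rows (index >= k) are empty; row i+1 is A i.
   Since a partition of 6 has at most 6 parts this is a faithful encoding. *)
Definition tab := {ffun 'I_6 -> {set pt}}.

Definition is_tabloid (lam : seq nat) (A : tab) : bool :=
  [forall i : 'I_6, #|A i| == nth 0 lam i] &&
  [forall i : 'I_6, forall j : 'I_6, (i != j) ==> [disjoint A i & A j]].

Definition T (lam : seq nat) : {set tab} := [set A | is_tabloid lam A].

Definition rows_upto (A : tab) (i : nat) : {set pt} :=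
  \bigcup_(j : 'I_6 | j < i) A j.

Definition tab_le (A B : tab) : Prop :=
  forall i : nat, 1 <= i -> rows_upto A i \subset rows_upto B i.

Definition tact (z : {perm pt}) (A : tab) : tab := [ffun i => z @: A i].

(* the generators (123456) and (16)(25)(34) *)
Definition rot : {perm pt} := perm (@ordS_inj 6).
Definition refl : {perm pt} := perm (@rev_ord_inj 6).

Definition G : {group {perm pt}} := <<[set rot; refl]>>%G.

Definition orb (A : tab) : {set tab} := [set tact z A | z in G].

Definition TG (lam : seq nat) : {set {set tab}} := [set orb A | A in T lam].

Definition TDG (D : seq (seq nat)) : {set {set tab}} :=
  \bigcup_(mu <- D) TG mu.

Definition orb_le (a b : {set tab}) : Prop :=
  exists A, exists B, [/\ A \in a, B \in b & tab_le A B].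

Definition D0 : seq (seq nat) := [:: [:: 4; 2]; [:: 3; 3]].

Definition in_Aut0 (D : seq (seq nat)) (alpha : {set tab} -> {set tab}) : Prop :=
  [/\ {in TDG D, forall a, alpha a \in TDG D},
      {in TDG D &, injective alpha},
      {in TDG D, forall b, exists2 a, a \in TDG D & alpha a = b},
      {in TDG D &, forall a b, orb_le (alpha a) (alpha b) <-> orb_le a b}
    & forall mu, mu \in D -> alpha @: TG mu = TG mu].

(* A tabloid of shape (4,2) or (3,3) is determined by its second row S, and
   (~: S, S) <= (~: S', S') iff S' \subset S.  Up to the dihedral group G there are
   three 2-subsets of the hexagon (an edge, a short diagonal, a long diagonal) and
   three 3-subsets (a path, {1,2,4}, a triangle), and a (3,3)-orbit lies below a
   (4,2)-orbit iff some element of G maps the pair into the triple.  In this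
   bipartite incidence the short diagonal meets all three triples, the edge two and
   the long diagonal one; dually {1,2,4} contains all three pairs, the path two and
   the triangle one.  The degrees being pairwise distinct, an order automorphism
   preserving the shapes fixes every orbit. *)

From Pilot Require Import Defs.
From mathcomp Require Import all_boot all_fingroup.
From mathcomp Require Import zify.
Set Implicit Arguments.
Unset Strict Implicit.
Unset Printing Implicit Defensive.

Definition dih (a : nat) (s : bool) (i : nat) : nat :=
  if s then (a + 6 - i) %% 6 else (a + i) %% 6.

Definition is_dih (x : {perm pt}) a s := forall i : pt, val (x i) = dih a s (val i).

Lemma dih_lt a s i : dih a s i < 6.
Proof. by rewrite /dih; case: s; rewrite ltn_pmod. Qed.

Lemma dih0 a s : a < 6 -> dih a s 0 = a.
Proof. by move=> ha; rewrite /dih; case: s; rewrite ?subn0 ?addn0 ?modnDr modn_small. Qed.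

Lemma dih_comp a b i s t : a < 6 -> b < 6 -> i < 6 ->
  dih b t (dih a s i) = dih (dih b t (dih a s 0)) (s (+) t) i.
Proof.
have table : all (fun a => all (fun b => all (fun i => all (fun s => all (fun t =>
    dih b t (dih a s i) == dih (dih b t (dih a s 0)) (s (+) t) i)
  [:: false; true]) [:: false; true]) (iota 0 6)) (iota 0 6)) (iota 0 6) by [].
move=> ha hb hi; move/allP/(_ a): table; rewrite mem_iota ha => /(_ isT).
move/allP/(_ b); rewrite mem_iota hb => /(_ isT).
move/allP/(_ i); rewrite mem_iota hi => /(_ isT).
by move/allP/(_ s); case: (s) => /(_ isT) /allP/(_ t); case: (t) => /(_ isT) /eqP.
Qed.

Lemma is_dihM x y a s b t : a < 6 -> b < 6 ->
  is_dih x a s -> is_dih y b t -> is_dih (x * y)%g (dih b t (dih a s 0)) (s (+) t).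
Proof. by move=> ha hb hx hy i; rewrite permM hy hx dih_comp ?ltn_ord. Qed.

Definition dihedral : {set {perm pt}} :=
  [set x : {perm pt} |
     [exists a : 'I_6, exists s, [forall i : pt, val (x i) == dih a s (val i)]]].

Lemma mem_dihedral x : x \in dihedral <-> exists a s, a < 6 /\ is_dih x a s.
Proof.
rewrite inE; split => [/existsP [a /existsP [s /forallP dx]]|[a [s [ha dx]]]].
  by exists a, s; split => // i; apply/eqP.
apply/existsP; exists (Ordinal ha); apply/existsP; exists s.
by apply/forallP => i; rewrite dx.
Qed.

Lemma is_dih1 : is_dih 1 0 false.
Proof. by move=> i; rewrite perm1 /dih add0n modn_small ?ltn_ord. Qed.

Lemma dihedral_group_set : group_set dihedral.
Proof.
apply/group_setP; split.
  by apply/mem_dihedral; exists 0, false; split => //; exact: is_dih1.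
move=> x y /mem_dihedral [a [s [ha dx]]] /mem_dihedral [b [t [hb dy]]].
apply/mem_dihedral; exists (dih b t (dih a s 0)), (s (+) t).
by split; [exact: dih_lt | exact: is_dihM].
Qed.

Canonical dihedral_group := Group dihedral_group_set.

Lemma rot_dih : is_dih Defs.rot 1 false.
Proof. by move=> i; rewrite permE. Qed.

Lemma refl_dih : is_dih refl 5 true.
Proof. by move=> i; rewrite permE /dih; case: i => [[|[|[|[|[|[|]]]]]] hi]. Qed.

Lemma rotX_dih n : is_dih (Defs.rot ^+ n) (n %% 6) false.
Proof.
elim: n => [|n IH]; first exact: is_dih1.
rewrite expgSr; have -> : n.+1 %% 6 = dih 1 false (dih (n %% 6) false 0).
  by rewrite dih0 ?ltn_pmod // /dih modnDmr add1n.
exact: is_dihM (ltn_pmod _ _) _ IH rot_dih.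
Qed.

Lemma rot_in_G : Defs.rot \in G.
Proof. by apply: mem_gen; rewrite !inE eqxx. Qed.

Lemma refl_in_G : refl \in G.
Proof. by apply: mem_gen; rewrite !inE eqxx orbT. Qed.

Lemma in_G_is_dih x : x \in G -> exists a s, a < 6 /\ is_dih x a s.
Proof.
move=> xG; apply/mem_dihedral; move: x xG; apply/subsetP.
rewrite gen_subG; apply/subsetP => y; rewrite in_set2 => /orP[] /eqP ->; apply/mem_dihedral.
  by exists 1, false; split => //; exact: rot_dih.
by exists 5, true; split => //; exact: refl_dih.
Qed.

Lemma is_dih_in_G a s : a < 6 -> exists2 x, x \in G & is_dih x a s.
Proof.
move=> ha; case: s.
  exists (refl * Defs.rot ^+ a.+1)%g; first by rewrite groupM ?groupX ?refl_in_G ?rot_in_G.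
  have e : dih (a.+1 %% 6) false (dih 5 true 0) = a.
    by case: a ha => [|[|[|[|[|[|]]]]]].
  have := is_dihM (isT : 5 < 6) (ltn_pmod _ (isT : 0 < 6)) refl_dih (rotX_dih a.+1).
  by rewrite e.
exists (Defs.rot ^+ a)%g; first by rewrite groupX ?rot_in_G.
by rewrite -{2}(modn_small ha); exact: rotX_dih.
Qed.

Lemma tact_comp w z A : tact w (tact z A) = tact (z * w)%g A.
Proof.
by apply/ffunP => i; rewrite !ffunE -imset_comp; apply: eq_imset => x; rewrite permM.
Qed.

Lemma orb_tact z A : z \in G -> orb (tact z A) = orb A.
Proof.
move=> zG; apply/setP => B; apply/imsetP/imsetP => [[w wG ->]|[w wG ->]].
  by exists (z * w)%g; [rewrite groupM | rewrite tact_comp].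
by exists (z^-1 * w)%g; [rewrite groupM ?groupV | rewrite tact_comp mulKVg].
Qed.

Lemma orb_refl A : A \in orb A.
Proof.
apply/imsetP; exists 1%g; first exact: group1.
by apply/ffunP => i; rewrite ffunE -[LHS]imset_id; apply: eq_imset => x; rewrite perm1.
Qed.

Definition two_row (S : {set pt}) : tab :=
  [ffun i : 'I_6 => if val i == 0 then ~: S else if val i == 1 then S else set0].

Definition row2 : 'I_6 := Ordinal (isT : 1 < 6).

Lemma tact_two_row z S : tact z (two_row S) = two_row (z @: S).
Proof.
apply/ffunP => i; rewrite !ffunE.
case: ifP => _.
  apply/setP => y; rewrite -[y](permKV z) in_setC !mem_imset ?in_setC //; exact: perm_inj.
by case: ifP => _ //; exact: imset0.
Qed.

Lemma rows_upto_two_row1 S : rows_upto (two_row S) 1 = ~: S.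
Proof.
apply/setP => y; apply/bigcupP/idP => [[j j0]|yS]; last by exists ord0; rewrite ?ffunE.
by rewrite ffunE; move: j0; rewrite ltnS leqn0 => ->.
Qed.

Lemma rows_upto_two_row_full S i : 2 <= i -> rows_upto (two_row S) i = setT.
Proof.
move=> i2; apply/setP => y; rewrite inE; apply/bigcupP.
case: (boolP (y \in S)) => yS; last by exists ord0; rewrite ?ffunE ?inE ?(leq_trans _ i2).
by exists row2; rewrite ?ffunE ?(leq_trans _ i2).
Qed.

Lemma tab_le_two_row X Y : tab_le (two_row X) (two_row Y) <-> Y \subset X.
Proof.
split; first by move/(_ 1 isT); rewrite !rows_upto_two_row1 setCS.
move=> YX [|[|i]] // _; first by rewrite !rows_upto_two_row1 setCS.
by rewrite [rows_upto (two_row Y) _]rows_upto_two_row_full // subsetT.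
Qed.

Lemma orb_le_two_row X Y :
  orb_le (orb (two_row X)) (orb (two_row Y)) <-> exists2 k, k \in G & k @: Y \subset X.
Proof.
split=> [[_ [_ [/imsetP [z zG ->] /imsetP [w wG ->]]]]|[k kG YX]].
  rewrite !tact_two_row => /tab_le_two_row wYzX.
  exists (w * z^-1)%g; first by rewrite groupM ?groupV.
  apply/subsetP => _ /imsetP [y yY ->]; rewrite permM.
  have : w y \in z @: X by apply: (subsetP wYzX); apply: imset_f.
  by rewrite -{1}[w y](permKV z) mem_imset //; exact: perm_inj.
exists (two_row X), (tact k (two_row Y)); split; first exact: orb_refl.
  by apply/imsetP; exists k.
by rewrite tact_two_row; apply/tab_le_two_row.
Qed.

Lemma T_two_row p q A : p + q = 6 -> A \in T [:: p; q] ->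
  A = two_row (A row2) /\ #|A row2| = q.
Proof.
move=> pq; rewrite inE => /andP [/forallP cardA /forallP disjA].
have c1 : #|A row2| = q by move/eqP: (cardA row2).
have c0 : #|A ord0| = p by move/eqP: (cardA ord0).
have row1 : A ord0 = ~: A row2.
  apply/eqP; rewrite eqEcard -disjoints_subset.
  move: (disjA ord0) => /forallP /(_ row2) /implyP -> //.
  have := cardsC (A row2); rewrite card_ord c1 c0 => /eqP; lia.
split => //; apply/ffunP => i; rewrite ffunE.
case: i => [[|[|n]] ni] /=.
- by rewrite -row1; congr (A _); apply: val_inj.
- by congr (A _); apply: val_inj.
- by apply: cards0_eq; move/eqP: (cardA (Ordinal ni)); rewrite /= nth_nil.
Qed.

Lemma two_row_T p q (S : {set pt}) : p + q = 6 -> #|S| = q -> two_row S \in T [:: p; q].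
Proof.
move=> pq cS; rewrite inE; apply/andP; split.
  apply/forallP => i; rewrite ffunE.
  case: i => [[|[|n]] ni] /=; rewrite ?cS ?cards0 ?nth_nil //.
  by have := cardsC S; rewrite card_ord cS => e; rewrite -(eqn_add2l q) e addnC pq.
apply/forallP => i; apply/forallP => j; rewrite !ffunE -val_eqE.
case: i => [[|[|n]] ni]; case: j => [[|[|m]] mj] /=;
  rewrite ?disjoints_subset ?setCK ?setC0 ?subsetT ?sub0set ?subxx ?implybT //.
Qed.

Definition bit (S : {set pt}) (n : nat) : bool := (inord n : pt) \in S.

Definition bits (S : {set pt}) : seq bool := map (bit S) (iota 0 6).

Lemma card_bits (S : {set pt}) : #|S| = count id (bits S).
Proof.
rewrite /bits count_map -val_enum_ord count_map cardE /enum_mem size_filter.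
rewrite (eq_filter (a2 := predT)) // filter_predT.
by apply: eq_count => i /=; rewrite /bit inord_val.
Qed.

Lemma nth_bits S (i : pt) : nth false (bits S) i = (i \in S).
Proof. by rewrite (nth_map 0) ?size_iota // nth_iota // add0n /bit inord_val. Qed.

(* Orbit representatives: pairs at distance 1, 2, 3, then the path, {0,1,3} and
   the triangle. *)
Definition rep (j : nat) : seq nat :=
  nth [::] [:: [:: 0; 1]; [:: 0; 2]; [:: 0; 3]; [:: 0; 1; 2]; [:: 0; 1; 3]; [:: 0; 2; 4]] j.

Definition rep_set (j : nat) : {set pt} := [set i : pt | val i \in rep j].

Definition rep_orbit (j : nat) : {set tab} := orb (two_row (rep_set j)).

Definition pair_ids : seq nat := [:: 0; 1; 2].
Definition triple_ids : seq nat := [:: 3; 4; 5].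

Lemma card_rep_set j : #|rep_set j| = count (mem (rep j)) (iota 0 6).
Proof.
rewrite card_bits count_map; apply: eq_in_count => n; rewrite mem_iota => /andP[_ n6].
by rewrite /= /bit inE /= inordK.
Qed.

(* Every bit vector [b] with [k] ones is the image of some [rep j], [j \in js],
   under a dihedral map. *)
Definition covered k (js : seq nat) (b : seq bool) : bool :=
  (count id b == k) ==> has (fun j => has (fun a => has (fun s =>
     all (fun i => (i \in rep j) == nth false b (dih a s i)) (iota 0 6))
   [:: false; true]) (iota 0 6)) js.

Lemma covered_bits S : covered 2 pair_ids (bits S) && covered 3 triple_ids (bits S).
Proof.
rewrite /bits /=.
by case: (bit S 0); case: (bit S 1); case: (bit S 2);
   case: (bit S 3); case: (bit S 4); case: (bit S 5).
Qed.

Lemma coveredP k js (S : {set pt}) : #|S| = k -> covered k js (bits S) ->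
  exists2 j, j \in js & exists2 x, x \in G & x @: rep_set j = S.
Proof.
rewrite /covered card_bits => <-; rewrite eqxx implyTb.
case/hasP => j jjs /hasP [a a6] /hasP [s _] /allP repS; exists j => //.
have [|x xG dx] := @is_dih_in_G a s; first by move: a6; rewrite mem_iota.
exists x => //; apply/setP => y; rewrite -[y](permKV x) mem_imset; last exact: perm_inj.
rewrite inE; have := repS (val ((x^-1)%g y)); rewrite mem_iota ltn_ord => /(_ isT) /eqP ->.
by rewrite -dx nth_bits.
Qed.

Lemma TG_two_row p q ids : p + q = 6 -> {in ids, forall j, #|rep_set j| = q} ->
  (forall S, covered q ids (bits S)) -> TG [:: p; q] = [set:: map rep_orbit ids].
Proof.
move=> pq card_ids cov; apply/setP => a; rewrite !inE; apply/imsetP/mapP.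
  case=> A AT ->; have [eA cA] := T_two_row pq AT.
  have [j jids [x xG xS]] := coveredP cA (cov _).
  by exists j; rewrite // eA -xS -tact_two_row orb_tact.
by case=> j jids ->; exists (two_row (rep_set j)); rewrite ?two_row_T ?card_ids.
Qed.

Lemma TG_pairs : TG [:: 4; 2] = [set:: map rep_orbit pair_ids].
Proof.
apply: TG_two_row => // [j|S]; last by case/andP: (covered_bits S).
by rewrite !inE => /or3P [] /eqP ->; rewrite card_rep_set.
Qed.

Lemma TG_triples : TG [:: 3; 3] = [set:: map rep_orbit triple_ids].
Proof.
apply: TG_two_row => // [j|S]; last by case/andP: (covered_bits S).
by rewrite !inE => /or3P [] /eqP ->; rewrite card_rep_set.
Qed.

Definition dih_maps_into r q : bool := has (fun a => has (fun s =>
    all (fun i => (i \in rep r) ==> (dih a s i \in rep q)) (iota 0 6))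
  [:: false; true]) (iota 0 6).

Lemma dih_maps_intoP r q :
  (exists2 k, k \in G & k @: rep_set r \subset rep_set q) <-> dih_maps_into r q.
Proof.
split=> [[k kG rq]|/hasP [a a6 /hasP [s _ /allP rq]]].
  have [a [s [a6 dk]]] := in_G_is_dih kG.
  apply/hasP; exists a; first by rewrite mem_iota.
  apply/hasP; exists s; first by case: (s).
  apply/allP => i; rewrite mem_iota add0n => /andP[_ i6]; apply/implyP => ir.
  have ir' : (inord i : pt) \in rep_set r by rewrite inE /= inordK.
  by have := subsetP rq _ (imset_f k ir'); rewrite inE dk /= inordK.
have [|x xG dx] := @is_dih_in_G a s; first by move: a6; rewrite mem_iota.
exists x => //; apply/subsetP => _ /imsetP [i ir ->]; rewrite inE dx.
by move: ir; rewrite inE; apply/implyP/rq; rewrite mem_iota ltn_ord.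
Qed.

Definition incident q r : bool := [|| q == 4, r == 1 | (q == 3) && (r == 0)].

Lemma dih_maps_into_incident q r : q \in triple_ids -> r \in pair_ids ->
  dih_maps_into r q = incident q r.
Proof. by rewrite !inE => /or3P [] /eqP -> /or3P [] /eqP ->. Qed.

Lemma rep_orbit_leP q r : q \in triple_ids -> r \in pair_ids ->
  orb_le (rep_orbit q) (rep_orbit r) <-> incident q r.
Proof.
move=> qt rp; rewrite -dih_maps_into_incident //.
exact: iff_trans (orb_le_two_row _ _) (dih_maps_intoP _ _).
Qed.

Lemma incidence_rigid (f : nat -> nat) :
  {in pair_ids, forall r, f r \in pair_ids} ->
  {in triple_ids, forall q, f q \in triple_ids} ->
  (forall q r, q \in triple_ids -> r \in pair_ids -> incident (f q) (f r) = incident q r) ->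
  {in pair_ids ++ triple_ids, forall j, f j = j}.
Proof.
move=> fp ft finc.
have incidence : [seq incident (f q) (f r) | q <- triple_ids, r <- pair_ids] ==
                 [seq incident q r | q <- triple_ids, r <- pair_ids].
  by rewrite /= !finc.
suff [e0 e1 e2 [e3 e4 e5]] :
    [/\ f 0 = 0, f 1 = 1, f 2 = 2 & [/\ f 3 = 3, f 4 = 4 & f 5 = 5]].
  by move=> j; rewrite mem_cat !inE => /orP [] /or3P [] /eqP ->.
move: (fp 0 isT) (fp 1 isT) (fp 2 isT) (ft 3 isT) (ft 4 isT) (ft 5 isT) incidence.
rewrite !inE /=.
by do 6 case/or3P=> /eqP ->.
Qed.

Lemma TDG_D0 : TDG D0 = TG [:: 4; 2] :|: TG [:: 3; 3].
Proof. by rewrite /TDG /D0 !big_cons big_nil setU0. Qed.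

Lemma rep_orbit_TDG j : j \in pair_ids ++ triple_ids -> rep_orbit j \in TDG D0.
Proof.
by rewrite TDG_D0 in_setU TG_pairs TG_triples !in_set mem_cat => /orP [] jids;
  rewrite (map_f _ jids) ?orbT.
Qed.

Lemma Aut0_rep_orbit alpha mu ids j : in_Aut0 D0 alpha ->
  TG mu = [set:: map rep_orbit ids] -> mu \in D0 -> j \in ids ->
  exists2 j', j' \in ids & alpha (rep_orbit j) = rep_orbit j'.
Proof.
move=> [_ _ _ _ shapes] TGmu muD jids.
have : alpha (rep_orbit j) \in alpha @: TG mu by rewrite imset_f // TGmu in_set map_f.
by rewrite shapes // TGmu in_set => /mapP.
Qed.

Lemma Aut0_fixes_rep_orbits alpha : in_Aut0 D0 alpha ->
  {in pair_ids ++ triple_ids, forall j, alpha (rep_orbit j) = rep_orbit j}.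
Proof.
move=> aut; have [_ _ _ le_iff _] := aut.
have [s0 s0p e0] := Aut0_rep_orbit (j := 0) aut TG_pairs isT isT.
have [s1 s1p e1] := Aut0_rep_orbit (j := 1) aut TG_pairs isT isT.
have [s2 s2p e2] := Aut0_rep_orbit (j := 2) aut TG_pairs isT isT.
have [t3 t3t e3] := Aut0_rep_orbit (j := 3) aut TG_triples isT isT.
have [t4 t4t e4] := Aut0_rep_orbit (j := 4) aut TG_triples isT isT.
have [t5 t5t e5] := Aut0_rep_orbit (j := 5) aut TG_triples isT isT.
pose f := nth 0 [:: s0; s1; s2; t3; t4; t5].
have alpha_f j : j \in pair_ids ++ triple_ids -> alpha (rep_orbit j) = rep_orbit (f j).
  by rewrite mem_cat !inE => /orP [] /or3P [] /eqP ->.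
have fp : {in pair_ids, forall r, f r \in pair_ids}.
  by apply/allP/and4P; split.
have ft : {in triple_ids, forall q, f q \in triple_ids}.
  by apply/allP/and4P; split.
move=> j jD; rewrite alpha_f // (incidence_rigid fp ft) // => q r qt rp.
have qD : q \in pair_ids ++ triple_ids by rewrite mem_cat qt orbT.
have rD : r \in pair_ids ++ triple_ids by rewrite mem_cat rp.
have inc_f : incident (f q) (f r) <-> incident q r.
  rewrite -(rep_orbit_leP (ft q qt) (fp r rp)) -(rep_orbit_leP qt rp) -!alpha_f //.
  exact: le_iff (rep_orbit_TDG qD) (rep_orbit_TDG rD).
by apply/idP/idP => /inc_f.
Qed.

Theorem theorem10p2p1 :
  forall alpha : {set tab} -> {set tab},
    in_Aut0 D0 alpha -> {in TDG D0, forall a, alpha a = a}.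
Proof.
move=> alpha aut a.
rewrite TDG_D0 in_setU TG_pairs TG_triples !in_set => /orP [] /mapP [j jids ->];
  by apply: Aut0_fixes_rep_orbits; rewrite // mem_cat jids ?orbT.
Qed.
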